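(* Let $B_J\in\mathbb R^{n\times n}$ and let $P_1,\dots,P_d$ ($1\le d\le n$) be nonzero $n\times n$ matrices with entries in $\{0,1\}$ such that $\sum_{p=1}^dP_p=I$ (a decomposition of the identity; hence each $P_p$ is a diagonal $0/1$ matrix and they have disjoint supports), and assume $P_pB_J\ne O$ for all $p$. Let $\mathcal P=\prod_{p=d}^{1}(P_pB_J+I-P_p)=(P_dB_J+I-P_d)\cdots(P_1B_J+I-P_1)$. Then $\mathcal P$ and the iteration matrix $T(\mathcal B)$ of the splitting $\mathcal B=(P_1B_J,\dots,P_dB_J)$ of $B_J$ have the same nonzero eigenvalues.
   Context: For $B\in\mathbb R^{n\times n}$, a splitting of $B$ of order $d\ge1$ is an ordered $d$-tuple $\mathcal B=(B_1,\dots,B_d)$ of real $n\times n$ matrices with $B_p\neq O$ for all $p$, $\sum_{p=1}^d B_p=B$, and $B_p\circ B_q=O$ (Hadamard product) for $p\ne q$. The iteration matrix of $\mathcal B$ is the $dn\times dn$ matrix $T(\mathcal B)=(I_{dn}-\mathcal L)^{-1}\mathcal U$, where $\mathcal L,\mathcal U$ are $d\times d$ block matrices with $n\times n$ blocks, $\mathcal L_{ij}=B_j$ if $i>j$ and $O$ otherwise, $\mathcal U_{ij}=B_j$ if $i\le j$ and $O$ otherwise. *)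

(* real matrices over an abstract real closed field R,
   eigenvalues taken in its algebraic closure R[i] (mathcomp-real-closed). *)
From HB Require Import structures.
From mathcomp Require Import all_boot all_order all_algebra.
Set Implicit Arguments. Unset Strict Implicit. Unset Printing Implicit Defensive.
Import Order.TTheory GRing.Theory Num.Theory.
Local Open Scope ring_scope.

Lemma blk_proof (d n : nat) (a : 'I_(d * n)) : (a %/ n < d)%N.
Proof.
have := ltn_ord a; move: (nat_of_ord a) => m; clear a; case: n => [|n]; first by rewrite muln0.
by rewrite ltn_divLR // mulnC.
Qed.

Definition blk (d n : nat) (a : 'I_(d * n)) : 'I_d := Ordinal (blk_proof a).
Lemma pos_proof (d n : nat) (a : 'I_(d * n)) : (a %% n < n)%N.
Proof.
have := ltn_ord a; move: (nat_of_ord a) => m; clear a; case: n => [|n].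
  by rewrite muln0.
by rewrite ltn_mod.
Qed.
Definition pos (d n : nat) (a : 'I_(d * n)) : 'I_n := Ordinal (pos_proof a).

Section Iter.
Variables (R : fieldType) (d n : nat).

Definition Lmx (Bs : 'I_d -> 'M[R]_n) : 'M[R]_(d * n) :=
  \matrix_(a, b) (if (blk b < blk a)%N then Bs (blk b) (pos a) (pos b) else 0).
Definition Umx (Bs : 'I_d -> 'M[R]_n) : 'M[R]_(d * n) :=
  \matrix_(a, b) (if (blk a <= blk b)%N then Bs (blk b) (pos a) (pos b) else 0).

Definition iter_mx (Bs : 'I_d -> 'M[R]_n) : 'M[R]_(d * n) :=
  invmx (1%:M - Lmx Bs) *m Umx Bs.

(* ordered product F_{d-1} * ... * F_1 * F_0  (0-indexed) *)
Definition rprod_mx (F : 'I_d -> 'M[R]_n) : 'M[R]_n :=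
  foldr (fun i acc => F i *m acc) 1%:M (rev (enum 'I_d)).
End Iter.

Definition is_splitting (R : fieldType) (d n : nat) (B : 'M[R]_n)
  (Bs : 'I_d -> 'M[R]_n) : Prop :=
  [/\ (0 < d)%N, forall p, Bs p != 0, \sum_p Bs p = B &
      forall p q, p != q -> forall i j, Bs p i j * Bs q i j = 0].

From HB Require Import structures.
From mathcomp Require Import all_boot all_order all_algebra.
From mathcomp Require Import complex.
Import Order.TTheory GRing.Theory Num.Theory.
Local Open Scope ring_scope.

Set Implicit Arguments. Unset Strict Implicit. Unset Printing Implicit Defensive.

(* The P_p are complete orthogonal idempotents Q_p, and the product is S_d, where
   S_k = F_{k-1} ... F_0 with F_p = 1 + Q_p (B - 1).  Applied to v, the partial
   products perform one Gauss-Seidel sweep: the Q_p-part of S_d v is Q_p B (S_p v),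
   while S_p v still has the same Q_p-part as v.  Hence if S_d v = lambda v, the
   block vector x with blocks x_p = S_p v satisfies (I - L)^-1 U x = lambda x;
   conversely, for lambda <> 0 an eigenvector x of the iteration matrix is
   determined by its first block w = x_0 through x_p = S_p w, and S_d w = lambda w. *)

Section Blocks.
Variables (F : fieldType) (d n : nat).

Lemma bidx_proof (j : 'I_d) (k : 'I_n) : (j * n + k < d * n)%N.
Proof.
have lt_jn : (j * n + k < j.+1 * n)%N by rewrite mulSn addnC ltn_add2r.
exact: leq_trans lt_jn (leq_mul (ltn_ord j) (leqnn n)).
Qed.

Definition bidx (j : 'I_d) (k : 'I_n) : 'I_(d * n) := Ordinal (bidx_proof j k).

Lemma blk_bidx j k : blk (bidx j k) = j.
Proof.
apply: val_inj => /=; have n_gt0 : (0 < n)%N by case: n k => [[]|].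
by rewrite divnMDl // divn_small // addn0.
Qed.

Lemma pos_bidx j k : pos (bidx j k) = k.
Proof. by apply: val_inj; rewrite /= modnMDl modn_small. Qed.

Lemma bidx_blk_pos (a : 'I_(d * n)) : bidx (blk a) (pos a) = a.
Proof. by apply: val_inj; rewrite /= -divn_eq. Qed.

Lemma sum_bidx (G : 'I_(d * n) -> F) : \sum_a G a = \sum_j \sum_k G (bidx j k).
Proof.
rewrite pair_big /= (reindex (fun jk : 'I_d * 'I_n => bidx jk.1 jk.2)) //=.
exists (fun a => (blk a, pos a)) => [[j k] _ | a _] /=.
  by rewrite blk_bidx pos_bidx.
by rewrite bidx_blk_pos.
Qed.

Definition block_cV (x : 'cV[F]_(d * n)) (j : 'I_d) : 'cV[F]_n :=
  \col_k x (bidx j k) 0.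

Definition mkblock_cV (X : 'I_d -> 'cV[F]_n) : 'cV[F]_(d * n) :=
  \col_a X (blk a) (pos a) 0.

Lemma mkblock_cVK X j : block_cV (mkblock_cV X) j = X j.
Proof. by apply/matrixP => k z; rewrite !mxE blk_bidx pos_bidx (ord1 z). Qed.

Lemma block_cVP x y : (forall j, block_cV x j = block_cV y j) -> x = y.
Proof.
move=> eq_xy; apply/matrixP => a z; rewrite (ord1 z) -(bidx_blk_pos a).
by have /matrixP /(_ (pos a) 0) := eq_xy (blk a); rewrite !mxE.
Qed.

Lemma block_cV0 j : block_cV 0 j = 0.
Proof. by apply/matrixP => k z; rewrite !mxE. Qed.

Lemma block_cVB x y j : block_cV (x - y) j = block_cV x j - block_cV y j.
Proof. by apply/matrixP => k z; rewrite !mxE. Qed.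

Lemma block_cVZ a x j : block_cV (a *: x) j = a *: block_cV x j.
Proof. by apply/matrixP => k z; rewrite !mxE. Qed.

Definition pattern_mx (C : 'I_d -> 'I_d -> bool) (Bs : 'I_d -> 'M[F]_n) :
    'M[F]_(d * n) :=
  \matrix_(a, b) (if C (blk a) (blk b) then Bs (blk b) (pos a) (pos b) else 0).

Lemma block_cV_pattern_mul C Bs x i :
  block_cV (pattern_mx C Bs *m x) i = \sum_(j | C i j) Bs j *m block_cV x j.
Proof.
apply/matrixP => k z; rewrite mxE [in LHS]mxE summxE sum_bidx [in RHS]big_mkcond /=.
apply: eq_bigr => j _; case Cij: (C i j).
  by rewrite mxE; apply: eq_bigr => l _; rewrite !mxE !blk_bidx !pos_bidx Cij.
by rewrite big1 // => l _; rewrite mxE !blk_bidx !pos_bidx Cij mul0r.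
Qed.

Lemma Lmx_pattern Bs : Lmx Bs = pattern_mx (fun i j => (j < i)%N) Bs.
Proof. by []. Qed.

Lemma Umx_pattern Bs : Umx Bs = pattern_mx (fun i j => (i <= j)%N) Bs.
Proof. by []. Qed.

End Blocks.

Lemma sum_if_ltn (V : zmodType) (d : nat) (i : 'I_d) (G1 G2 : 'I_d -> V) :
  \sum_(m : 'I_d) (if (m < i)%N then G1 m else G2 m) =
  \sum_(m : 'I_d | (m < i)%N) G1 m + \sum_(m : 'I_d | (i <= m)%N) G2 m.
Proof.
rewrite (bigID (fun m : 'I_d => (m < i)%N)) /=; congr (_ + _).
  by apply: eq_bigr => m ->.
rewrite (eq_bigl (fun m : 'I_d => (i <= m)%N)) => [|m]; last by rewrite -leqNgt.
by apply: eq_bigr => m; rewrite ltnNge => ->.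
Qed.

Section OrthogonalIdempotents.
Variables (F : fieldType) (d n : nat) (Q : 'I_d -> 'M[F]_n).
Hypothesis mulQ : forall p q, Q p *m Q q = if p == q then Q p else 0.
Hypothesis sumQ1 : \sum_p Q p = 1%:M.

Lemma sumQ_mul (v : 'cV[F]_n) : \sum_j Q j *m v = v.
Proof. by rewrite -mulmx_suml sumQ1 mul1mx. Qed.

Lemma mulQ_sum_if m (P : pred 'I_d) (Z : 'I_d -> 'cV[F]_n) :
  Q m *m \sum_(j | P j) Q j *m Z j = if P m then Q m *m Z m else 0.
Proof.
rewrite mulmx_sumr big_mkcond (bigD1 m) //= big1 => [|j ne_jm].
  by rewrite mulmxA mulQ eqxx addr0.
by case: (P j); rewrite // mulmxA mulQ eq_sym (negbTE ne_jm) mul0mx.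
Qed.

Lemma mulQ_sum m (Z : 'I_d -> 'cV[F]_n) : Q m *m \sum_j Q j *m Z j = Q m *m Z m.
Proof. exact: mulQ_sum_if. Qed.

Variable B : 'M[F]_n.

Definition sweep_factor (k : nat) : 'M[F]_n :=
  oapp (fun p : 'I_d => Q p *m B + 1%:M - Q p) 1%:M (insub k).

Fixpoint sweep_mx (k : nat) : 'M[F]_n :=
  if k is k'.+1 then sweep_factor k' *m sweep_mx k' else 1%:M.

Lemma sweep_mx_iota k :
  sweep_mx k = foldr (fun j acc => sweep_factor j *m acc) 1%:M (rev (iota 0 k)).
Proof. by elim: k => // k IH; rewrite -addn1 iotaD rev_cat /= -IH addn1. Qed.

Lemma rprod_sweep : rprod_mx (fun p => Q p *m B + 1%:M - Q p) = sweep_mx d.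
Proof.
rewrite sweep_mx_iota -val_enum_ord -map_rev /rprod_mx.
by elim: (rev _) => //= p s ->; rewrite /sweep_factor valK.
Qed.

Lemma sweep_mxE (v : 'cV[F]_n) k : (k <= d)%N ->
  sweep_mx k *m v =
  \sum_m Q m *m (if (m < k)%N then B *m (sweep_mx m *m v) else v).
Proof.
elim: k => [_ | k IH lt_kd]; first by rewrite mul1mx sumQ_mul.
pose p : 'I_d := Ordinal lt_kd.
have Qp_sweep : Q p *m (sweep_mx k *m v) = Q p *m v.
  by rewrite (IH (ltnW lt_kd)) mulQ_sum ltnn.
have insub_k : insub k = Some p := valK p.
rewrite /= /sweep_factor insub_k /= -mulmxA mulmxBl mulmxDl mul1mx Qp_sweep.
have -> : \sum_m Q m *m (if (m < k.+1)%N then B *m (sweep_mx m *m v) else v) =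
    \sum_m (Q m *m (if (m < k)%N then B *m (sweep_mx m *m v) else v) +
            (if m == p then Q p *m B *m (sweep_mx k *m v) - Q p *m v else 0)).
  apply: eq_bigr => m _; case: (eqVneq m p) => [-> | ne_mp].
    by rewrite ltnSn ltnn mulmxA addrC subrK.
  have ne_mk : (val m == k) = false by apply/negbTE; rewrite -(inj_eq val_inj) in ne_mp.
  by rewrite addr0 ltnS leq_eqVlt ne_mk.
rewrite big_split -big_mkcond big_pred1_eq -IH 1?ltnW // /=.
by rewrite addrA (addrC (Q p *m B *m _)).
Qed.

End OrthogonalIdempotents.

Lemma eigenvalue_trmx (F : fieldType) n (g : 'M[F]_n) a :
  eigenvalue g^T a = eigenvalue g a.
Proof.
rewrite /eigenvalue /eigenspace !kermx_eq0 !row_free_unit -[in RHS]unitmx_tr.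
by rewrite linearB /= tr_scalar_mx.
Qed.

Lemma eigenvalue_colP (F : fieldType) n (g : 'M[F]_n) a :
  reflect (exists2 x : 'cV_n, g *m x = a *: x & x != 0) (eigenvalue g a).
Proof.
rewrite -eigenvalue_trmx; apply: (iffP eigenvalueP) => -[v gv nz_v]; exists v^T.
- by apply: trmx_inj; rewrite trmx_mul trmxK gv linearZ /= trmxK.
- by rewrite -trmx0 (inj_eq trmx_inj).
- by rewrite -trmx_mul gv linearZ.
- by rewrite -trmx0 (inj_eq trmx_inj).
Qed.

Section IterationMatrix.
Variables (F : fieldType) (d n : nat) (Bs : 'I_d -> 'M[F]_n).

Lemma unitmx_1BLmx : 1%:M - Lmx Bs \in unitmx.
Proof.
rewrite -unitmx_tr -row_free_unit; apply: inj_row_free => u uM0.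
apply: trmx_inj; rewrite trmx0; set x := u^T.
have Mx0 : (1%:M - Lmx Bs) *m x = 0.
  by apply: trmx_inj; rewrite trmx_mul trmxK uM0 trmx0.
have xE i : block_cV x i = \sum_(j : 'I_d | (j < i)%N) Bs j *m block_cV x j.
  apply/eqP; rewrite -subr_eq0 -(block_cV_pattern_mul (fun i j => (j < i)%N)).
  by rewrite -Lmx_pattern -block_cVB -{1}[x]mul1mx -mulmxBl Mx0 block_cV0.
apply: block_cVP => j; rewrite block_cV0.
have [k] := ubnP j; elim: k j => // k IH j lt_jk.
by rewrite xE big1 // => l lt_lj; rewrite IH ?mulmx0 // (leq_trans lt_lj).
Qed.

Lemma iter_mx_eigenE (lam : F) (x : 'cV[F]_(d * n)) :
  (iter_mx Bs *m x = lam *: x) <->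
  (forall i : 'I_d, \sum_(j : 'I_d | (i <= j)%N) Bs j *m block_cV x j =
     lam *: (block_cV x i - \sum_(j : 'I_d | (j < i)%N) Bs j *m block_cV x j)).
Proof.
have -> : iter_mx Bs *m x = lam *: x <-> Umx Bs *m x = lam *: ((1%:M - Lmx Bs) *m x).
  have M_unit := unitmx_1BLmx.
  rewrite /iter_mx -mulmxA; split => [Tx | ->]; last by rewrite -scalemxAr mulKmx.
  by rewrite scalemxAr -Tx mulKVmx.
have Mx_blockE i : block_cV ((1%:M - Lmx Bs) *m x) i =
    block_cV x i - \sum_(j : 'I_d | (j < i)%N) Bs j *m block_cV x j.
  by rewrite mulmxBl mul1mx block_cVB Lmx_pattern block_cV_pattern_mul.
split=> [eq_x i | eq_x].
  by rewrite -Mx_blockE -block_cVZ -eq_x Umx_pattern block_cV_pattern_mul.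
apply: block_cVP => i.
by rewrite block_cVZ Mx_blockE -eq_x Umx_pattern block_cV_pattern_mul.
Qed.

End IterationMatrix.

Section SameNonzeroEigenvalues.
Variables (F : fieldType) (d n : nat) (Q : 'I_d.+1 -> 'M[F]_n) (B : 'M[F]_n).
Hypothesis mulQ : forall p q, Q p *m Q q = if p == q then Q p else 0.
Hypothesis sumQ1 : \sum_p Q p = 1%:M.
Variable lam : F.

Local Notation QB := (fun p => Q p *m B).
Local Notation S := (sweep_mx Q B).

Definition scale_below (w : 'cV[F]_n) (i : nat) : 'cV[F]_n :=
  \sum_(m : 'I_d.+1) (if (m < i)%N then lam *: (Q m *m w) else Q m *m w).

Lemma iter_eigen_scale_below (w : 'cV[F]_n) x :
    (forall m, block_cV x m = scale_below w m) ->
    (forall m, Q m *m (B *m block_cV x m) = lam *: (Q m *m w)) ->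
  iter_mx QB *m x = lam *: x.
Proof.
move=> xE QBx; apply/iter_mx_eigenE => i.
under eq_bigr do rewrite -mulmxA QBx; under [in RHS]eq_bigr do rewrite -mulmxA QBx.
by rewrite xE /scale_below sum_if_ltn [X in X - _]addrC addrK scaler_sumr.
Qed.

Lemma sweep_eigen_iter_eigen v : S d.+1 *m v = lam *: v ->
  iter_mx QB *m mkblock_cV (fun i => S i *m v) = lam *: mkblock_cV (fun i => S i *m v).
Proof.
move=> Sv; have QBS m : Q m *m (B *m (S m *m v)) = lam *: (Q m *m v).
  by rewrite scalemxAr -Sv (sweep_mxE mulQ sumQ1 B v (leqnn _)) (mulQ_sum mulQ) ltn_ord.
apply: (@iter_eigen_scale_below v) => m; rewrite mkblock_cVK ?QBS //.
rewrite (sweep_mxE mulQ sumQ1 B) ?(ltnW (ltn_ord m)) //.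
by apply: eq_bigr => j _; case: ifP; rewrite ?QBS.
Qed.

Hypothesis lam_neq0 : lam != 0.

Lemma iter_eigen_blocksE x : iter_mx QB *m x = lam *: x ->
  let w := block_cV x ord0 in
  (forall m, Q m *m (B *m block_cV x m) = lam *: (Q m *m w)) /\
  (forall i, block_cV x i = scale_below w i).
Proof.
move/iter_mx_eigenE => xE w.
have QxE (i m : 'I_d.+1) : (if (i <= m)%N then Q m *m (B *m block_cV x m) else 0) =
    lam *: (Q m *m block_cV x i - (if (m < i)%N then Q m *m (B *m block_cV x m) else 0)).
  have := congr1 (mulmx (Q m)) (xE i).
  under eq_bigr do rewrite -mulmxA; under [in X in _ = X -> _]eq_bigr do rewrite -mulmxA.
  by rewrite (mulQ_sum_if mulQ) -scalemxAr mulmxBr (mulQ_sum_if mulQ).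
have QBx m : Q m *m (B *m block_cV x m) = lam *: (Q m *m w).
  by have := QxE ord0 m; rewrite leq0n ltn0 subr0.
split=> // i; rewrite -[LHS](sumQ_mul sumQ1); apply: eq_bigr => m _.
have := QxE i m; case: leqP => [le_im | lt_mi]; rewrite QBx.
  by rewrite subr0 => /(scalerI lam_neq0).
by move/esym/eqP; rewrite scaler_eq0 (negbTE lam_neq0) subr_eq0 => /eqP.
Qed.

Lemma iter_eigen_sweep_eigen x : iter_mx QB *m x = lam *: x ->
  let w := block_cV x ord0 in
  (forall i : 'I_d.+1, S i *m w = block_cV x i) /\ S d.+1 *m w = lam *: w.
Proof.
move=> /iter_eigen_blocksE [QBx xE] w.
have Sw_x (i : 'I_d.+1) : S i *m w = block_cV x i.
  have [k] := ubnP i; elim: k i => // k IH i lt_ik.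
  rewrite (sweep_mxE mulQ sumQ1 B w (ltnW (ltn_ord i))) xE.
  apply: eq_bigr => m _; case: ifP => // lt_mi.
  by rewrite IH ?QBx // (leq_trans lt_mi).
split=> //; rewrite (sweep_mxE mulQ sumQ1 B w (leqnn _)).
under eq_bigr do rewrite ltn_ord Sw_x QBx.
by rewrite -scaler_sumr (sumQ_mul sumQ1).
Qed.

Theorem eigenvalue_rprod_iter_mx :
  eigenvalue (rprod_mx (fun p => Q p *m B + 1%:M - Q p)) lam =
  eigenvalue (iter_mx QB) lam.
Proof.
rewrite rprod_sweep; apply/eigenvalue_colP/eigenvalue_colP => -[v Tv nz_v].
  exists (mkblock_cV (fun i => S i *m v)); first exact: sweep_eigen_iter_eigen.
  apply: contraNneq nz_v => /(congr1 (fun x => block_cV x ord0)).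
  by rewrite mkblock_cVK block_cV0 /= mul1mx => ->.
have [Sw_x Sw] := iter_eigen_sweep_eigen Tv.
exists (block_cV v ord0) => //; apply: contraNneq nz_v => w0.
by apply/eqP/block_cVP => i; rewrite -Sw_x w0 mulmx0 block_cV0.
Qed.

End SameNonzeroEigenvalues.

Section MapMx.
Variables (F K : fieldType) (f : {rmorphism F -> K}) (d n : nat).

Lemma map_rprod_mx (G : 'I_d -> 'M[F]_n) (H : 'I_d -> 'M[K]_n) :
  (forall p, map_mx f (G p) = H p) -> map_mx f (rprod_mx G) = rprod_mx H.
Proof.
by move=> GH; rewrite /rprod_mx; elim: (rev _) => [|p s IH] /=;
  rewrite ?map_mx1 ?map_mxM ?IH ?GH.
Qed.

Lemma map_pattern_mx C (G : 'I_d -> 'M[F]_n) (H : 'I_d -> 'M[K]_n) :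
  (forall p, map_mx f (G p) = H p) -> map_mx f (pattern_mx C G) = pattern_mx C H.
Proof.
by move=> GH; apply/matrixP => a b; rewrite !mxE -GH; case: ifP; rewrite ?mxE ?rmorph0.
Qed.

Lemma map_iter_mx (G : 'I_d -> 'M[F]_n) (H : 'I_d -> 'M[K]_n) :
  (forall p, map_mx f (G p) = H p) -> map_mx f (iter_mx G) = iter_mx H.
Proof.
move=> GH; rewrite /iter_mx map_mxM map_invmx map_mxB map_mx1.
by rewrite !Lmx_pattern Umx_pattern !(map_pattern_mx _ GH).
Qed.

End MapMx.

Lemma mulmx_01_decomposition (R : numDomainType) d n (P : 'I_d -> 'M[R]_n) :
  (forall p i j, P p i j = 0 \/ P p i j = 1) -> \sum_p P p = 1%:M ->
  forall p q, P p *m P q = if p == q then P p else 0.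
Proof.
move=> P01 sumP1.
have P_ge0 p i j : 0 <= P p i j by case: (P01 p i j) => ->.
have sumPE i j : \sum_p P p i j = (i == j)%:R by rewrite -summxE sumP1 mxE.
have P_offdiag p i j : i != j -> P p i j = 0.
  move=> ne_ij; have := sumPE i j; rewrite (negbTE ne_ij).
  by move/psumr_eq0P => -> // q _; apply: P_ge0.
have P_disj p q i : p != q -> P p i i * P q i i = 0.
  move=> ne_pq; have := sumPE i i; rewrite eqxx (bigD1 p) //= (bigD1 q) /=; last first.
    by rewrite eq_sym.
  have : 0 <= \sum_(r | (r != p) && (r != q)) P r i i by apply: sumr_ge0.
  case: (P01 p i i) => ->; first by rewrite mul0r.
  case: (P01 q i i) => ->; first by rewrite mulr0.
  by move=> S_ge0 /eqP; rewrite -subr_eq0 addrC addrK paddr_eq0 ?ler01 // oner_eq0.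
move=> p q; apply/matrixP => i j; rewrite !mxE (bigD1 i) //= big1 ?addr0; last first.
  by move=> k ne_ki; rewrite P_offdiag ?mul0r // eq_sym.
have [<- | ne_ij] := eqVneq i j; last first.
  by rewrite (P_offdiag q i j ne_ij) mulr0; case: eqP; rewrite ?mxE ?P_offdiag.
have [<- | ne_pq] := eqVneq p q; last by rewrite mxE P_disj.
by case: (P01 p i i) => ->; rewrite ?mul0r ?mul1r.
Qed.

Theorem proposition5p1 (R : rcfType) (n d : nat) (BJ : 'M[R]_n)
    (P : 'I_d -> 'M[R]_n) :
  (1 <= d)%N -> (d <= n)%N ->
  (forall p i j, P p i j = 0 \/ P p i j = 1) ->
  (forall p, P p != 0) ->
  \sum_p P p = 1%:M ->
  (forall p, P p *m BJ != 0) ->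
  forall lambda : R[i], lambda != 0 ->
    eigenvalue (map_mx (real_complex R)
                  (rprod_mx (fun p => P p *m BJ + 1%:M - P p))) lambda
    = eigenvalue (map_mx (real_complex R)
                  (iter_mx (fun p => P p *m BJ))) lambda.
Proof.
case: d P => // d P _ _ P01 _ sumP1 _ lam lam_neq0.
set f := real_complex R; pose Q p := map_mx f (P p).
have mulP := mulmx_01_decomposition P01 sumP1.
rewrite (@map_rprod_mx _ _ f _ _ _ (fun p => Q p *m map_mx f BJ + 1%:M - Q p)); last first.
  by move=> p; rewrite map_mxB map_mxD map_mxM map_mx1.
rewrite (@map_iter_mx _ _ f _ _ _ (fun p => Q p *m map_mx f BJ)); last first.
  by move=> p; rewrite map_mxM.
apply: eigenvalue_rprod_iter_mx lam_neq0.
  by move=> p q; rewrite -map_mxM mulP; case: eqP; rewrite ?map_mx0.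
by rewrite -(map_mx1 f) -sumP1 raddf_sum.
Qed.
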